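(* Let $P\subseteq\mathbb{P}^{n-1}$ be a full-dimensional polytope. Then its slicing set is \[P^{[n-1]}=\{V\in\mathrm{Gr}(n-1,n)\mid \overline{\mathrm{var}}(\mathrm{C}_P^{n-1}(V))\ge1\}.\]
   Context: Work over $\mathbb{R}$. $\mathrm{Gr}(n-1,n)$ is the set of hyperplanes (codimension-one linear subspaces) of $\mathbb{R}^n$, identified with their images in $\mathbb{P}^{n-1}$. A polytope $P\subseteq\mathbb{P}^{n-1}$ is the image in $\mathbb{P}^{n-1}$ of a cone $\{\sum c_iv_i:c_i\ge0\}$ over finitely many $v_i\in\mathbb{R}^n$; full-dimensional means the underlying polytope has dimension $n-1$. $P^{[n-1]}=\{V\in\mathrm{Gr}(n-1,n)\mid V\cap P\neq\emptyset\}$. Fix an ordering $w_1,\ldots,w_f$ of the vertices of $P$ and a representative vector in $\mathbb{R}^n$ for each. For $V=\ker(a)$ with $a=(a_1,\ldots,a_n)$ a nonzero row vector, the Chow form of the vertex $w_j$ is $C_{w_j}(V)=\sum_{i=1}^n (w_j)_i a_i$, and $\mathrm{C}_P^{n-1}(V)=(C_{w_1}(V),\ldots,C_{w_f}(V))$, defined up to a common nonzero scalar. For a real vector $x$, $\overline{\mathrm{var}}(x)$ is the maximal number of sign changes in the sequence obtained from $x$ by replacing each zero entry by $+$ or $-$ in any way. *)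

From HB Require Import structures.
From mathcomp Require Import all_boot all_order all_algebra.
From mathcomp Require Import reals.
Set Implicit Arguments. Unset Strict Implicit. Unset Printing Implicit Defensive.
Import Order.TTheory GRing.Theory Num.Theory.
Local Open Scope ring_scope.

Section Defs.
Variable R : realType.

Definition pairing (n : nat) (a x : 'rV[R]_n) : R := \sum_(i < n) x 0 i * a 0 i.

Definition in_cone (n m : nat) (v : 'I_m -> 'rV[R]_n) (x : 'rV[R]_n) : Prop :=
  exists c : 'I_m -> R, (forall i, 0 <= c i) /\ x = \sum_(i < m) c i *: v i.

(* The cone is pointed (contains no line): C ∩ -C = {0}.  This is what makes
   its image in P^{n-1} a polytope. *)
Definition pointed_cone (n m : nat) (v : 'I_m -> 'rV[R]_n) : Prop :=
  forall x, in_cone v x -> in_cone v (- x) -> x = 0.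

(* Full-dimensional: the cone spans R^n (polytope of dimension n-1). *)
Definition full_dim_cone (n m : nat) (v : 'I_m -> 'rV[R]_n) : Prop :=
  \rank (\matrix_(i < m) v i) = n.

(* x spans an extreme ray of the cone (= a vertex of P). *)
Definition extreme_ray (n m : nat) (v : 'I_m -> 'rV[R]_n) (x : 'rV[R]_n) : Prop :=
  [/\ x != 0, in_cone v x &
      forall y z, in_cone v y -> in_cone v z -> x = y + z ->
        exists t : R, 0 <= t /\ y = t *: x].

(* w_0, ..., w_(f-1) is an enumeration (without repetition) of the vertices of
   P, each given by a representative vector lying in the cone. *)
Definition vertex_list (n m f : nat) (v : 'I_m -> 'rV[R]_n) (w : 'I_f -> 'rV[R]_n)
  : Prop :=
  [/\ forall j, extreme_ray v (w j),
      forall j k, (exists t : R, 0 < t /\ w j = t *: w k) -> j = k &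
      forall x, extreme_ray v x -> exists j, exists t : R, 0 < t /\ x = t *: w j].

(* Chow form vector C_P^{n-1}(ker a) = (C_{w_1}(ker a), ..., C_{w_f}(ker a)). *)
Definition chow_vector (n f : nat) (w : 'I_f -> 'rV[R]_n) (a : 'rV[R]_n) : 'I_f -> R :=
  fun j => pairing a (w j).

(* Number of sign changes of a sequence of signs (true = +, false = -). *)
Definition sign_changes (s : seq bool) : nat :=
  count (fun p : bool * bool => p.1 != p.2) (zip s (behead s)).

Definition compatible_signs (f : nat) (x : 'I_f -> R) (s : {ffun 'I_f -> bool}) : bool :=
  [forall i, ((0 < x i) ==> s i) && ((x i < 0) ==> ~~ s i)].

Definition var_bar (f : nat) (x : 'I_f -> R) : nat :=
  \max_(s : {ffun 'I_f -> bool} | compatible_signs x s)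
     sign_changes [seq s i | i <- enum 'I_f].

End Defs.

From HB Require Import structures.
From mathcomp Require Import all_boot all_order all_algebra.
From mathcomp Require Import reals.
From Stdlib Require Import Classical.
Import Order.TTheory GRing.Theory Num.Theory.
Local Open Scope ring_scope.
Set Implicit Arguments. Unset Strict Implicit. Unset Printing Implicit Defensive.

(* A pointed finitely generated cone is the conic hull of its extreme rays:
   drop generators lying in the cone of the remaining ones until none can be
   dropped, at which point every nonzero generator spans an extreme ray.  So
   ker a meets P iff a annihilates a nonzero nonnegative combination of the
   vertices w_j.  Such a combination cannot exist if the values a(w_j) all have
   the same strict sign, and they are not all zero because a does not vanish on
   the full-dimensional cone.  Conversely, if a(w_j) <= 0 <= a(w_k) with
   a(w_j) < 0, then a(w_k) w_j - a(w_j) w_k is a point of the hyperplane, nonzero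
   by pointedness.  Finally, var-bar(x) >= 1 exactly when x_j <= 0 <= x_k for two
   distinct indices j, k. *)

Section Pairing.
Variables (R : realType) (n : nat).
Implicit Types (a x y : 'rV[R]_n) (t : R).

Lemma pairingD a x y : pairing a (x + y) = pairing a x + pairing a y.
Proof. by rewrite /pairing -big_split; apply: eq_bigr => i _; rewrite !mxE mulrDl. Qed.

Lemma pairingZ a t x : pairing a (t *: x) = t * pairing a x.
Proof. by rewrite /pairing mulr_sumr; apply: eq_bigr => i _; rewrite !mxE mulrA. Qed.

Lemma pairing_sumZ (I : finType) (c : I -> R) (x : I -> 'rV[R]_n) a :
  pairing a (\sum_i c i *: x i) = \sum_i c i * pairing a (x i).
Proof.
rewrite /pairing; under eq_bigr do rewrite summxE mulr_suml.
rewrite exchange_big; apply: eq_bigr => i _; rewrite mulr_sumr.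
by apply: eq_bigr => k _; rewrite mxE mulrA.
Qed.

End Pairing.

Section Cone.
Variables (R : realType) (n m : nat) (v : 'I_m -> 'rV[R]_n).
Implicit Types (a x y z : 'rV[R]_n) (t : R).

Lemma in_cone0 : in_cone v 0.
Proof. by exists (fun=> 0); split=> //; rewrite big1 // => i _; rewrite scale0r. Qed.

Lemma in_coneD x y : in_cone v x -> in_cone v y -> in_cone v (x + y).
Proof.
move=> [c [c_ge0 ->]] [d [d_ge0 ->]]; exists (fun i => c i + d i); split.
  by move=> i; rewrite addr_ge0.
by rewrite -big_split; apply: eq_bigr => i _; rewrite scalerDl.
Qed.

Lemma in_coneZ t x : 0 <= t -> in_cone v x -> in_cone v (t *: x).
Proof.
move=> t_ge0 [c [c_ge0 ->]]; exists (fun i => t * c i); split.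
  by move=> i; rewrite mulr_ge0.
by rewrite scaler_sumr; apply: eq_bigr => i _; rewrite scalerA.
Qed.

Lemma in_cone_gen k : in_cone v (v k).
Proof.
exists (fun i => (i == k)%:R); split=> [i|]; first exact: ler0n.
rewrite (bigD1 k) //= eqxx scale1r big1 ?addr0 // => i /negPf->.
by rewrite scale0r.
Qed.

Lemma in_cone_trans (l : nat) (u : 'I_l -> 'rV[R]_n) x :
  (forall j, in_cone v (u j)) -> in_cone u x -> in_cone v x.
Proof.
move=> u_in [c [c_ge0 ->]].
by apply: big_ind => [|y z|j _]; [exact: in_cone0 | exact: in_coneD | exact: in_coneZ].
Qed.

Lemma pointed_addr_eq0 x y : pointed_cone v ->
  in_cone v x -> in_cone v y -> x + y = 0 -> x = 0.
Proof.
move=> v_pointed vx vy /eqP; rewrite addr_eq0 => /eqP xE.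
by apply: v_pointed; rewrite // xE opprK.
Qed.

Lemma pairing_gens_eq0 a : full_dim_cone v ->
  (forall i, pairing a (v i) = 0) -> a = 0.
Proof.
move=> v_full a_gens.
have /row_fullP [B BV] : row_full (\matrix_(i < m) v i) by rewrite /row_full v_full.
have Va : (\matrix_(i < m) v i) *m a^T = 0.
  apply/matrixP => i j; rewrite !mxE; apply: etrans (a_gens i).
  by apply: eq_bigr => k _; rewrite !mxE (ord1 j).
apply: trmx_inj; rewrite -[a^T]mul1mx -BV -mulmxA Va mulmx0.
by apply/matrixP => i j; rewrite !mxE.
Qed.

Lemma hyperplane_meets_cone a y z : pointed_cone v ->
  in_cone v y -> in_cone v z -> y != 0 -> z != 0 ->
  pairing a y <= 0 -> 0 <= pairing a z ->
  exists x, [/\ in_cone v x, x != 0 & pairing a x = 0].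
Proof.
move=> v_pointed vy vz y_neq0 z_neq0 ay_le0 az_ge0.
have [ay0|ay_neq0] := eqVneq (pairing a y) 0; first by exists y.
have ay_lt0 : 0 < - pairing a y by rewrite oppr_gt0 lt_neqAle ay_neq0.
exists ((- pairing a y) *: z + pairing a z *: y); split.
- by apply: in_coneD; apply: in_coneZ => //; exact: ltW.
- apply: contra_neq z_neq0 => /(pointed_addr_eq0 v_pointed) zE.
  have /eqP := zE (in_coneZ (ltW ay_lt0) vz) (in_coneZ az_ge0 vy).
  by rewrite scaler_eq0 gt_eqF //= => /eqP.
- by rewrite pairingD !pairingZ mulNr mulrC addNr.
Qed.

End Cone.

Section ExtremeRays.
Variables (R : realType) (n m : nat) (v : 'I_m -> 'rV[R]_n).
Hypothesis v_pointed : pointed_cone v.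
Implicit Types (S : {set 'I_m}) (x y : 'rV[R]_n).

Definition subfamily S i : 'rV[R]_n := if i \in S then v i else 0.

Definition generates S := forall k, in_cone (subfamily S) (v k).

Lemma generates_setT : generates setT.
Proof.
by move=> k; have := in_cone_gen (subfamily setT) k; rewrite /subfamily in_setT.
Qed.

Lemma subfamily_in_cone S x : in_cone (subfamily S) x -> in_cone v x.
Proof.
apply: in_cone_trans => i; rewrite /subfamily.
by case: ifP => _; [exact: in_cone_gen | exact: in_cone0].
Qed.

Lemma in_cone_subfamilyD1 S i y : i \in S -> in_cone (subfamily S) y ->
  exists t r, [/\ 0 <= t, in_cone (subfamily (S :\ i)) r & y = t *: v i + r].
Proof.
move=> iS [c [c_ge0 ->]]; exists (c i), (\sum_k c k *: subfamily (S :\ i) k).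
split=> //; first by exists c.
rewrite (bigD1 i) //= [in RHS](bigD1 i) //= /subfamily iS setD11 scaler0 add0r.
by congr (_ + _); apply: eq_bigr => k ki; rewrite in_setD1 ki.
Qed.

Lemma generates_setD1 S i : generates S ->
  in_cone (subfamily (S :\ i)) (v i) -> generates (S :\ i).
Proof.
move=> genS vi k; apply: in_cone_trans (genS k) => j.
rewrite [subfamily S j]/subfamily.
case: ifP => jS; last exact: in_cone0.
have [->|ji] := eqVneq j i; first exact: vi.
by have := in_cone_gen (subfamily (S :\ i)) j; rewrite /subfamily in_setD1 ji jS.
Qed.

(* Split both summands along v i: if their v i-coefficients add up to less
   than 1, v i lies in the cone of the other generators; otherwise pointedness
   forces the remaining parts to vanish. *)
Lemma extreme_ray_of_nonredundant S i : generates S -> i \in S -> v i != 0 ->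
  ~ in_cone (subfamily (S :\ i)) (v i) -> extreme_ray v (v i).
Proof.
move=> genS iS vi_neq0 vi_nonred; split=> //; first exact: in_cone_gen.
move=> y z vy vz yz.
have [t [r [t_ge0 rS yE]]] := in_cone_subfamilyD1 iS (in_cone_trans genS vy).
have [s [q [s_ge0 qS zE]]] := in_cone_subfamilyD1 iS (in_cone_trans genS vz).
have rqE : r + q = (1 - (t + s)) *: v i.
  apply/eqP; rewrite scalerBl scale1r scalerDl eq_sym subr_eq {1}yz yE zE.
  by rewrite addrACA addrC.
have rq_in : in_cone (subfamily (S :\ i)) (r + q) by exact: in_coneD.
have [ts_lt1|ts_ge1] := ltrP (t + s) 1.
  have ts_neq0 : 1 - (t + s) != 0 by rewrite subr_eq0 gt_eqF.
  case: vi_nonred; rewrite -[v i](scalerK ts_neq0) -rqE.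
  by apply: in_coneZ rq_in; rewrite invr_ge0 subr_ge0 ltW.
have r_in := subfamily_in_cone rS; have q_in := subfamily_in_cone qS.
have rq0 : r + q = 0.
  have vi_in : in_cone v ((t + s - 1) *: v i).
    by apply: in_coneZ (in_cone_gen v i); rewrite subr_ge0.
  apply: (pointed_addr_eq0 v_pointed (in_coneD r_in q_in) vi_in).
  by rewrite rqE -scalerDl addrC addrA subrK subrr scale0r.
have r0 : r = 0 := pointed_addr_eq0 v_pointed r_in q_in rq0.
by exists t; rewrite yE r0 addr0.
Qed.

Lemma exists_extreme_generating : exists2 S, generates S &
  forall i, i \in S -> v i = 0 \/ extreme_ray v (v i).
Proof.
suff shrink S : generates S -> exists2 S', generates S' &
    forall i, i \in S' -> v i = 0 \/ extreme_ray v (v i).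
  exact: shrink generates_setT.
elim: {S}_.+1 {-2}S (ltnSn #|S|) => // k IH S card_S genS.
have [[i [iS vi_neq0 vi_red]]|nonred] :=
  classic (exists i, [/\ i \in S, v i != 0 & in_cone (subfamily (S :\ i)) (v i)]).
  apply: IH (generates_setD1 genS vi_red).
  by move: card_S; rewrite (cardsD1 i) iS.
exists S => // i iS; have [|vi_neq0] := eqVneq (v i) 0; [left | right] => //.
apply: (extreme_ray_of_nonredundant genS iS vi_neq0) => vi_red.
by apply: nonred; exists i.
Qed.

End ExtremeRays.

Lemma in_cone_vertices (R : realType) (n m f : nat)
    (v : 'I_m -> 'rV[R]_n) (w : 'I_f -> 'rV[R]_n) x :
  pointed_cone v -> vertex_list v w -> in_cone v x -> in_cone w x.
Proof.
move=> v_pointed [_ _ w_all] vx.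
have [S genS S_ext] := exists_extreme_generating v_pointed.
apply: in_cone_trans (in_cone_trans genS vx) => i; rewrite /subfamily.
case: ifP => [iS|_]; last exact: in_cone0.
case: (S_ext i iS) => [->|/w_all [j [t [t_gt0 ->]]]]; first exact: in_cone0.
exact: in_coneZ (ltW t_gt0) (in_cone_gen w j).
Qed.

Lemma sign_changes_gt0 (s : seq bool) :
  (0 < sign_changes s)%N = (false \in s) && (true \in s).
Proof.
elim: s => [//|a [|b s] IH]; first by case: a.
have -> : sign_changes [:: a, b & s] = ((a != b) + sign_changes (b :: s))%N by [].
have [->|] := eqVneq a b; first by rewrite add0n IH !(inE, orbA, orbb).
by clear IH; case: a; case: b; rewrite //= !inE.
Qed.

Section SignVariation.
Variables (R : realType) (f : nat).
Implicit Types (c p : 'I_f -> R).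

Lemma var_bar_gt0P p :
  reflect (exists j k, [/\ j != k, p j <= 0 & 0 <= p k]) (0 < var_bar p)%N.
Proof.
apply: (iffP idP) => [var_gt0|[j [k [jk pj pk]]]].
  pose changes (s : {ffun 'I_f -> bool}) := sign_changes [seq s i | i <- enum 'I_f].
  have [s /andP [ps s_sc]|no_s] :=
    pickP [pred s | compatible_signs p s & 0 < changes s]%N.
    move: s_sc; rewrite sign_changes_gt0 => /andP [/mapP [j _ sj] /mapP [k _ sk]].
    have /andP [pj _] := forallP ps j; have /andP [_ pk] := forallP ps k.
    exists j, k; split.
    - by apply/eqP => jk; move: sk; rewrite -jk -sj.
    - by move: pj; rewrite -sj implybF -leNgt.
    - by move: pk; rewrite -sk implybF -leNgt.
  suff var0 : (var_bar p <= 0)%N by move: var_gt0; rewrite ltnNge var0.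
  apply/bigmax_leqP => s ps; rewrite leqn0 eqn0Ngt.
  by have := no_s s; rewrite /= ps => /negbT.
pose s := [ffun i => if i == j then false else if i == k then true else 0 < p i].
have ps : compatible_signs p s.
  apply/forallP => i; rewrite ffunE.
  have [->|ij] := eqVneq i j; first by rewrite ltNge pj implybT.
  have [->|ik] := eqVneq i k; first by rewrite implybT ltNge pk.
  by case: (ltrgtP (p i) 0).
apply: leq_trans (leq_bigmax_cond _ ps); rewrite sign_changes_gt0.
apply/andP; split; apply/mapP.
  by exists j; rewrite ?mem_enum // ffunE eqxx.
by exists k; rewrite ?mem_enum // ffunE eq_sym (negPf jk) eqxx.
Qed.

Lemma nonneg_comb_eq0_sign_change c p : (forall j, 0 <= c j) ->
  (exists j, c j != 0) -> (exists l, p l != 0) -> \sum_j c j * p j = 0 ->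
  exists j k, [/\ j != k, p j <= 0 & 0 <= p k].
Proof.
move=> c_ge0 [i ci_neq0] [l pl_neq0] sum0.
wlog pl_gt0 : p pl_neq0 sum0 / 0 < p l.
  move=> wlog_pos; move: (pl_neq0); rewrite neq_lt.
  case/orP => [pl_lt0|]; last exact: wlog_pos.
  have [|||j [k [jk pj pk]]] := wlog_pos (fun j => - p j).
  - by rewrite oppr_eq0.
  - by under eq_bigr do rewrite mulrN; rewrite sumrN sum0 oppr0.
  - by rewrite oppr_gt0.
  by exists k, j; split; [rewrite eq_sym | rewrite -oppr_ge0 | rewrite -oppr_le0].
have /existsP [j pj] : [exists j, p j <= 0].
  apply: contraT; rewrite negb_exists => /forallP p_gt0.
  have /psumr_eq0P terms0 : forall j, true -> 0 <= c j * p j.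
    by move=> j _; rewrite mulr_ge0 // ltW // ltNge p_gt0.
  move: (terms0 sum0 i isT) => /eqP.
  by rewrite mulf_eq0 (negPf ci_neq0) gt_eqF // ltNge p_gt0.
exists j, l; split=> //; last exact: ltW.
by apply: contraTneq pj => ->; rewrite -ltNge.
Qed.

End SignVariation.

Theorem corollary5p3 (R : realType) (n m f : nat)
    (v : 'I_m -> 'rV[R]_n) (w : 'I_f -> 'rV[R]_n) :
  pointed_cone v -> full_dim_cone v -> vertex_list v w ->
  forall a : 'rV[R]_n, a != 0 ->
    (exists x : 'rV[R]_n, [/\ in_cone v x, x != 0 & pairing a x = 0])
    <-> (1 <= var_bar (chow_vector w a))%N.
Proof.
move=> v_pointed v_full w_vert a a_neq0; have [w_ext _ _] := w_vert.
have w_in j : in_cone v (w j) by case: (w_ext j).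
have w_neq0 j : w j != 0 by case: (w_ext j).
split=> [[x [vx x_neq0 ax]]|/var_bar_gt0P [j [k [_ pj pk]]]]; last first.
  exact: hyperplane_meets_cone v_pointed (w_in j) (w_in k) (w_neq0 j) (w_neq0 k) pj pk.
have [c [c_ge0 xE]] := in_cone_vertices v_pointed w_vert vx.
apply/var_bar_gt0P/(nonneg_comb_eq0_sign_change c_ge0).
- apply/existsP; apply: contraNT x_neq0 => /existsPn c0.
  by rewrite xE big1 // => j _; rewrite (eqP (negbNE (c0 j))) scale0r.
- apply/existsP; apply: contraNT a_neq0 => /existsPn p0.
  apply/eqP/(pairing_gens_eq0 v_full) => i.
  have [d [_ ->]] := in_cone_vertices v_pointed w_vert (in_cone_gen v i).
  rewrite pairing_sumZ big1 // => j _.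
  by move: (p0 j); rewrite negbK /chow_vector => /eqP ->; rewrite mulr0.
- by rewrite -pairing_sumZ -xE.
Qed.
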